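(* Let $p$ be a prime, $n$ a positive integer, $S\subseteq S_n$ containing the identity and $G$ the subgroup generated by $S$. Suppose $x_0,x_1,\dots,x_{n-1}$ is a basis of $\mathbb{Z}_p^n$ such that for every $j\in\{0,\dots,n-1\}$ and every $g\in G$, the vector $x_j-g\cdot x_j$ lies in the span of $x_0,\dots,x_{j-1}$ (the zero space when $j=0$). For $i\in\{1,\dots,p^n-1\}$ let $y_i=x_{v_p(i)}$, where $v_p$ is the $p$-adic valuation. Then $y_1,\dots,y_{p^n-1}$ is a winning sequence of moves in the $(S,p)$-game.
   Context: For $g\in S_n$ and $x\in\mathbb{Z}_p^n$, $g\cdot x$ is the vector $x'$ with $x'_{g(i)}=x_i$. The $(S,m)$-game: $n$ counters at positions $1,\dots,n$, each showing an element of $\mathbb{Z}_m$; a configuration is a vector in $\mathbb{Z}_m^n$, initially arbitrary and unknown. Each turn the player chooses a move $y\in\mathbb{Z}_m^n$ added coordinatewise, then an adversarially chosen $\sigma\in S$ is applied, replacing $x$ by $\sigma\cdot x$. The player wins if at some moment (including initially) all counters show $0$. A finite sequence of moves is winning if it forces the zero configuration at some time for every initial configuration and every choice of permutations. *)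

From HB Require Import structures.
From mathcomp Require Import all_boot all_order all_fingroup all_algebra.
Set Implicit Arguments. Unset Strict Implicit. Unset Printing Implicit Defensive.
Import GRing.Theory.
Local Open Scope ring_scope.

(* g . x : the vector x' with x'_{g i} = x_i, i.e. x'_j = x_{g^-1 j}. *)
Definition pact (R : Type) (n : nat) (g : {perm 'I_n}) (x : 'rV[R]_n) : 'rV[R]_n :=
  \row_j x 0 ((g^-1)%g j).

(* Configuration after t turns: initial configuration c0, moves ys (turn t
   uses ys`_t), adversarial permutations sig t applied after move t. *)
Fixpoint config (R : nzRingType) (n : nat) (ys : seq 'rV[R]_n)
    (sig : nat -> {perm 'I_n}) (c0 : 'rV[R]_n) (t : nat) : 'rV[R]_n :=
  match t with
  | 0 => c0
  | t'.+1 => pact (sig t') (config ys sig c0 t' + nth 0 ys t')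
  end.

Definition winning (R : nzRingType) (n : nat) (S : {set {perm 'I_n}})
    (ys : seq 'rV[R]_n) : Prop :=
  forall (c0 : 'rV[R]_n) (sig : nat -> {perm 'I_n}),
    (forall t, (t < size ys)%N -> sig t \in S) ->
    exists2 t, (t <= size ys)%N & config ys sig c0 t = 0.

Definition xseq (V : Type) (n : nat) (x : 'I_n -> V) : seq V := [seq x j | j <- enum 'I_n].

Definition xspan_below (K : fieldType) (n : nat) (x : 'I_n -> 'rV[K]_n) (j : nat)
  : {vspace 'rV[K]_n} := <<[seq x k | k <- enum 'I_n & (val k < j)%N]>>%VS.

Definition yseq (K : fieldType) (p n : nat) (x : 'I_n -> 'rV[K]_n) : seq 'rV[K]_n :=
  [seq nth 0 (xseq x) (logn p i) | i <- iota 1 (p ^ n).-1].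

From HB Require Import structures.
From mathcomp Require Import all_boot all_order all_fingroup all_algebra.
From mathcomp Require Import zify.
Set Implicit Arguments.
Unset Strict Implicit.
Unset Printing Implicit Defensive.
Import GRing.Theory.
Local Open Scope ring_scope.

(* Write W_j for the span of x_0, ..., x_(j-1).  The flag hypothesis says that
   every g in G fixes x_j modulo W_j, so G stabilises each W_j.  By induction
   on j: if at a time s divisible by p^j the configuration lies in W_j, then it
   is 0 at some time in [s, s + p^j).  Modulo W_(j-1) the configuration is
   a x_(j-1); in each block of p^(j-1) consecutive moves only the last one,
   of valuation j-1, is x_(j-1) and the others lie in W_(j-1), so after k
   blocks it is (a + k) x_(j-1) modulo W_(j-1).  For the k < p with a + k = 0
   in Z_p the configuration is in W_(j-1) at a time divisible by p^(j-1). *)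

Lemma logn_addl_pfactor (p k s r : nat) : prime p -> (p ^ k %| s)%N ->
  (0 < r < p ^ k)%N -> logn p (s + r) = logn p r.
Proof.
move=> pr_p dvd_s /andP[r_gt0 r_lt].
have sr_gt0 : (0 < s + r)%N by rewrite addn_gt0 r_gt0 orbT.
have not_dvd_r : ~~ (p ^ k %| r)%N by apply/negP => /(dvdn_leq r_gt0); lia.
have lt_k (m : nat) : (0 < m)%N -> ~~ (p ^ k %| m)%N -> (logn p m < k)%N.
  by move=> m_gt0; rewrite (pfactor_dvdn _ _ m_gt0) // -ltnNge.
have lt_sr : (logn p (s + r) < k)%N by rewrite lt_k // dvdn_addr.
have dvd_pow (i : nat) : (i < k)%N -> (p ^ i %| s)%N.
  by move=> /ltnW ik; apply: dvdn_trans dvd_s; rewrite dvdn_exp2l.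
apply/eqP; rewrite eqn_leq -pfactor_dvdn // -(pfactor_dvdn _ _ sr_gt0) //.
have lt_r : (logn p r < k)%N by exact: lt_k.
rewrite -(dvdn_addr _ (dvd_pow _ lt_sr)) pfactor_dvdnn.
by rewrite dvdn_addr ?dvd_pow ?pfactor_dvdnn.
Qed.

Lemma logn_lt_pfactorS (p j r : nat) : prime p -> (0 < r < p ^ j.+1)%N ->
  if (p ^ j %| r)%N then logn p r = j else (logn p r < j)%N.
Proof.
move=> pr_p /andP[r_gt0 r_lt]; rewrite (pfactor_dvdn _ _ r_gt0) //.
case: leqP => // j_le; apply/eqP; rewrite eqn_leq j_le andbT.
rewrite -ltnS -(ltn_exp2l _ _ (prime_gt1 pr_p)); apply: leq_ltn_trans r_lt.
exact: dvdn_leq r_gt0 (pfactor_dvdnn p r).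
Qed.

Definition flag {K : fieldType} {vT : vectType K} (e : nat -> vT) (j : nat)
  : {vspace vT} := <<mkseq e j>>%VS.

Section Flag.
Variables (K : fieldType) (vT : vectType K) (e : nat -> vT).

Lemma flag0 : flag e 0 = 0%VS.
Proof. exact: span_nil. Qed.

Lemma flagS (j : nat) : flag e j.+1 = (flag e j + <[e j]>)%VS.
Proof. by rewrite /flag mkseqS -cats1 span_cat span_seq1. Qed.

Lemma flag_mem (k j : nat) : (k < j)%N -> e k \in flag e j.
Proof. by move=> kj; apply: memv_span; apply/mapP; exists k; rewrite ?mem_iota. Qed.

Lemma flag_subS (j : nat) : (flag e j <= flag e j.+1)%VS.
Proof. by rewrite flagS addvSl. Qed.

End Flag.

Lemma flag_mulmx_stable (K : fieldType) (m : nat) (e : nat -> 'rV[K]_m)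
    (A : 'M[K]_m) (j : nat) (v : 'rV[K]_m) :
  (forall i, e i *m A - e i \in flag e i) -> v \in flag e j -> v *m A \in flag e j.
Proof.
move=> e_drift; elim: j v => [|j IHj] v.
  by rewrite flag0 memv0 => /eqP->; rewrite mul0mx mem0v.
have in_flagS (w : 'rV[K]_m) : w \in flag e j -> w \in flag e j.+1.
  exact: (subvP (flag_subS e j)).
rewrite {1}flagS => /memv_addP[u u_in [w /vlineP[a ->] ->]].
rewrite mulmxDl -scalemxAl -[e j *m A](subrK (e j)).
have eA_in : e j *m A - e j + e j \in flag e j.+1.
  by rewrite memvD ?flag_mem // in_flagS.
by rewrite memvD ?memvZ // in_flagS ?IHj.
Qed.

Section FlagGame.
Variables (p m T : nat) (e : nat -> 'rV['F_p]_m) (M : nat -> 'M['F_p]_m).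
Variable c : nat -> 'rV['F_p]_m.
Hypothesis pr_p : prime p.
Hypothesis e_drift : forall t j, (t < T)%N -> e j *m M t - e j \in flag e j.
Hypothesis c_step : forall t, (t < T)%N -> c t.+1 = (c t + e (logn p t.+1)) *m M t.

Lemma flag_coset_step (t j : nat) (b : 'F_p) (v : 'rV['F_p]_m) : (t < T)%N ->
  v - b *: e j \in flag e j -> v *m M t - b *: e j \in flag e j.
Proof.
move=> t_lt v_in.
have -> : v *m M t - b *: e j = (v - b *: e j) *m M t + b *: (e j *m M t - e j).
  by rewrite mulmxBl -scalemxAl scalerBr addrA subrK.
by rewrite memvD ?memvZ ?e_drift // (flag_mulmx_stable (fun i => e_drift i t_lt)).
Qed.

Lemma flag_block_coeff (j s : nat) (b : 'F_p) : (p ^ j.+1 %| s)%N ->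
    c s - b *: e j \in flag e j ->
  forall r, (r < p ^ j.+1)%N -> (s + r <= T)%N ->
    c (s + r) - (b + (r %/ p ^ j)%:R) *: e j \in flag e j.
Proof.
move=> dvd_s c_s; elim=> [|r IHr] r_lt sr_le; first by rewrite addn0 div0n addr0.
have st_lt : (s + r < T)%N by rewrite -addnS.
rewrite addnS c_step // -addnS (logn_addl_pfactor pr_p dvd_s) ?r_lt //.
rewrite divnS ?expn_gt0 ?prime_gt0 //; apply: flag_coset_step => //.
have := logn_lt_pfactorS (r := r.+1) pr_p r_lt; case: ifP => _ /= logn_r.
- rewrite logn_r -natr1 addrA scalerDl scale1r opprD addrACA subrr addr0.
  by rewrite IHr // ltnW.
- by rewrite addrAC memvD ?flag_mem // IHr // ltnW.
Qed.

Lemma flag_config_hits_zero (j s : nat) :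
  (p ^ j %| s)%N -> (s + p ^ j <= T.+1)%N -> c s \in flag e j -> exists2 t, (s <= t < s + p ^ j)%N & c t = 0.
Proof.
elim: j s => [|j IHj] s dvd_s s_le.
  by rewrite flag0 memv0 => /eqP c_s0; exists s; rewrite ?expn0 ?addn1 ?leqnn.
rewrite flagS => /memv_addP[u u_in [w /vlineP[a ->] c_s]].
have pj_gt0 : (0 < p ^ j)%N by rewrite expn_gt0 prime_gt0.
pose k : nat := val (- a).
have k_lt : (k < p)%N by rewrite -[X in (_ < X)%N](Fp_cast pr_p) ltn_ord.
have a_k : a + k%:R = 0 by rewrite /k natr_Zp subrr.
have blocks_le : (k * p ^ j + p ^ j <= p ^ j.+1)%N.
  by rewrite expnS -mulSnr leq_mul2r k_lt orbT.
have sk_le : (s + k * p ^ j + p ^ j <= T.+1)%N by move: s_le blocks_le; lia.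
have c_sk : c (s + k * p ^ j) \in flag e j.
  have c_s_coset : c s - a *: e j \in flag e j by rewrite c_s addrK.
  have := flag_block_coeff dvd_s c_s_coset (r := k * p ^ j).
  rewrite mulnK // a_k scale0r subr0; apply; move: sk_le blocks_le; lia.
have dvd_sk : (p ^ j %| s + k * p ^ j)%N.
  by rewrite dvdn_add ?dvdn_mull // (dvdn_trans _ dvd_s) // dvdn_exp2l.
have [t /andP[t_ge t_lt] c_t] := IHj _ dvd_sk sk_le c_sk.
by exists t => //; move: t_ge t_lt blocks_le; lia.
Qed.

End FlagGame.

Lemma pact_mulmx (R : nzRingType) (n : nat) (g : {perm 'I_n}) (v : 'rV[R]_n) :
  pact g v = v *m perm_mx g.
Proof. by rewrite -[g in perm_mx g]invgK -col_permE; apply/rowP => i; rewrite !mxE. Qed.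

Section XSeq.
Variables (K : fieldType) (n : nat) (x : 'I_n -> 'rV[K]_n).

Lemma nth_xseq (k : 'I_n) : nth 0 (xseq x) k = x k.
Proof. by rewrite (nth_map k) ?size_enum_ord // nth_ord_enum. Qed.

Lemma size_xseq : size (xseq x) = n.
Proof. by rewrite size_map size_enum_ord. Qed.

Lemma xspan_below_flag (j : nat) : xspan_below x j = flag (nth 0 (xseq x)) j.
Proof.
apply/eqP; rewrite eqEsubv; apply/andP; split; apply/span_subvP => u /mapP[k].
  by rewrite mem_filter => /andP[k_lt _] ->; rewrite -nth_xseq flag_mem.
rewrite mem_iota add0n => /andP[_ k_lt] ->.
have [k_n | n_le] := ltnP k n; last by rewrite nth_default ?size_xseq ?mem0v.
rewrite (nth_xseq (Ordinal k_n)); apply/memv_span/map_f.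
by rewrite mem_filter mem_enum andbT.
Qed.

End XSeq.

Lemma nth_yseq (K : fieldType) (p n : nat) (x : 'I_n -> 'rV[K]_n) (t : nat) :
  (t < (p ^ n).-1)%N -> nth 0 (yseq p x) t = nth 0 (xseq x) (logn p t.+1).
Proof. by move=> t_lt; rewrite (nth_map 0%N) ?size_iota // nth_iota // add1n. Qed.

Theorem mainTheorem12 (p n : nat) (pr_p : prime p) (n_gt0 : (0 < n)%N)
  (S : {set {perm 'I_n}}) (S1 : (1%g : {perm 'I_n}) \in S)
  (x : 'I_n -> 'rV['F_p]_n)
  (xbasis : basis_of fullv (xseq x))
  (xflag : forall (j : 'I_n) (g : {perm 'I_n}), g \in <<S>>%g ->
      x j - pact g (x j) \in xspan_below x j) :
  winning S (yseq p x).
Proof.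
move=> c0 sig sigS; set e := nth 0 (xseq x).
have size_ys : (size (yseq p x)).+1 = (p ^ n)%N.
  by rewrite size_map size_iota prednK // expn_gt0 prime_gt0.
have e_drift t j : (t < size (yseq p x))%N ->
    e j *m perm_mx (sig t) - e j \in flag e j.
  move=> /sigS /(mem_gen (A := S)) sig_t; rewrite -xspan_below_flag.
  have [j_n | n_le] := ltnP j n.
    by rewrite /e (nth_xseq x (Ordinal j_n)) -(pact_mulmx (sig t)) -opprB memvN xflag.
  by rewrite /e nth_default ?size_xseq ?mul0mx ?subr0 ?mem0v.
have c_step t : (t < size (yseq p x))%N -> config (yseq p x) sig c0 t.+1 =
    (config (yseq p x) sig c0 t + e (logn p t.+1)) *m perm_mx (sig t).
  by move=> t_lt /=; rewrite pact_mulmx nth_yseq // -ltnS -size_ys.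
have c0_in : c0 \in flag e n.
  have := mkseq_nth 0 (xseq x); rewrite size_xseq => xseq_mkseq.
  by move: xbasis => /andP[/eqP span_x _]; rewrite /flag xseq_mkseq span_x memvf.
have [t /andP[_ t_lt] c_t] := flag_config_hits_zero pr_p e_drift c_step
  (dvdn0 (p ^ n)) (eq_leq (esym size_ys)) c0_in.
by exists t; rewrite // -ltnS size_ys.
Qed.
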